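(* Let $(M,\rho)$ be a complete metric space and let $f,g:M\to\mathbb{R}$ be Lipschitz functions such that $f$ is bounded below and $$|\widetilde\nabla f|(x)\ge|\widetilde\nabla g|(x)\qquad\text{for all } x\in M.$$ Then $$\inf_M(f-g)=\inf_{\varepsilon\operatorname{Crit} f}(f-g)\qquad\text{for every }\varepsilon>0.$$
   Context: $[t]^+:=\max\{0,t\}$. The global slope is $|\widetilde\nabla f|(x):=\sup_{y\neq x}\frac{[f(x)-f(y)]^+}{\rho(x,y)}\in[0,+\infty]$. For $\varepsilon\ge0$, $\varepsilon\operatorname{Crit} f:=\{x:\ |\widetilde\nabla f|(x)\le\varepsilon\}=\{x:\ f(y)\ge f(x)-\varepsilon\rho(y,x)\ \forall y\in M\}$. *)

From Stdlib Require Import Reals.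
From Coquelicot Require Import Coquelicot.
Open Scope R_scope.

Definition is_metric {M : Type} (rho : M -> M -> R) : Prop :=
  (forall x y, 0 <= rho x y) /\
  (forall x y, rho x y = 0 <-> x = y) /\
  (forall x y, rho x y = rho y x) /\
  (forall x y z, rho x z <= rho x y + rho y z).

Definition cauchy_seq {M : Type} (rho : M -> M -> R) (u : nat -> M) : Prop :=
  forall eps, 0 < eps -> exists N : nat, forall n m : nat,
    (N <= n)%nat -> (N <= m)%nat -> rho (u n) (u m) < eps.

Definition converges_to {M : Type} (rho : M -> M -> R) (u : nat -> M) (x : M) : Prop :=
  forall eps, 0 < eps -> exists N : nat, forall n : nat,
    (N <= n)%nat -> rho (u n) x < eps.

Definition complete_metric {M : Type} (rho : M -> M -> R) : Prop :=
  is_metric rho /\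
  forall u : nat -> M, cauchy_seq rho u -> exists x, converges_to rho u x.

Definition lipschitz {M : Type} (rho : M -> M -> R) (f : M -> R) : Prop :=
  exists L : R, forall x y, Rabs (f x - f y) <= L * rho x y.

Definition bounded_below {M : Type} (f : M -> R) : Prop :=
  exists m : R, forall x, m <= f x.

(* global slope |~nabla f|(x) = sup_{y <> x} [f x - f y]^+ / rho x y  in [0,+oo]
   (0 is included so that the supremum over an empty index set is 0; this
   does not change the value otherwise since all quotients are >= 0). *)
Definition global_slope {M : Type} (rho : M -> M -> R) (f : M -> R) (x : M) : Rbar :=
  Lub_Rbar (fun r => r = 0 \/
    exists y, y <> x /\ r = Rmax 0 (f x - f y) / rho x y).

Definition eps_crit {M : Type} (rho : M -> M -> R) (f : M -> R) (eps : R) (x : M) : Prop :=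
  Rbar_le (global_slope rho f x) (Finite eps).

(* infimum of h over the set A, in [-oo,+oo] (inf of the empty set is +oo) *)
Definition inf_over {M : Type} (A : M -> Prop) (h : M -> R) : Rbar :=
  Glb_Rbar (fun r => exists x, A x /\ r = h x).

From Stdlib Require Import Reals Lra Lia Classical ClassicalEpsilon.
From Coquelicot Require Import Coquelicot.
Open Scope R_scope.

(* Fix eps > 0, a point x0 and a tolerance d > 0; it suffices to
   find an eps-critical point y of f with (f - g)(y) <= (f - g)(x0) + d.
   For a small c > 0 put G := (1 + c) f - g and apply a variant of Ekeland's
   variational principle to the order
       z <= y  iff  f z + eps rho(y,z) <= f y  and  G z <= G y,
   which yields a point y below x0 that is minimal for this order.  Being
   below x0 gives (f - g)(y) <= (f - g)(x0) + c (f x0 - inf f) <= ... + d.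
   If y were not eps-critical, a point z with f y - f z > t rho(y,z) for a
   t slightly below |~nabla f|(y) would, thanks to |~nabla g| <= |~nabla f|,
   lie strictly below y: contradiction with minimality. *)

Lemma near_minimizer {T : Type} (P : T -> Prop) (F : T -> R) (m e : R) (x : T) :
  P x -> (forall y, P y -> m <= F y) -> 0 < e ->
  exists y, P y /\ forall y', P y' -> F y <= F y' + e.
Proof.
  intros Px Hm He. apply NNPP. intros Hnone.
  (* otherwise every point of P could be improved by e, forever *)
  assert (Hdesc : forall y, P y -> exists y', P y' /\ F y' < F y - e).
  { intros y Py. apply NNPP. intros Hno. apply Hnone. exists y. split; [exact Py|].
    intros y' Py'. apply Rnot_lt_le. intros Hlt. apply Hno. exists y'. split; [exact Py'|lra]. }
  assert (Hiter : forall k, exists y, P y /\ F y <= F x - INR k * e).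
  { induction k as [|k [y [Py Hy]]].
    - exists x. simpl. split; [exact Px|lra].
    - destruct (Hdesc y Py) as [y' [Py' Hy']]. exists y'. rewrite S_INR. split; [exact Py'|lra]. }
  destruct (INR_unbounded ((F x - m) / e)) as [k Hk].
  destruct (Hiter k) as [y [Py Hy]].
  assert (Hke : F x - m < INR k * e).
  { apply (Rmult_lt_compat_r e) in Hk; [|exact He].
    unfold Rdiv in Hk. rewrite Rmult_assoc, Rinv_l, Rmult_1_r in Hk by lra. exact Hk. }
  specialize (Hm y Py). lra.
Qed.

Lemma dependent_choice {T : Type} (P : nat -> T -> T -> Prop) (x0 : T) :
  (forall n x, exists y, P n x y) ->
  exists u : nat -> T, u O = x0 /\ forall n, P n (u n) (u (S n)).
Proof.
  intros H.
  set (next := fun n x => proj1_sig (constructive_indefinite_description _ (H n x))).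
  exists (fix u n := match n with O => x0 | S k => next k (u k) end).
  split; [reflexivity|]. intro n. unfold next.
  exact (proj2_sig (constructive_indefinite_description _ (H n _))).
Qed.

Lemma pow_half_small (y : R) : 0 < y -> exists N, forall n, (N <= n)%nat -> (/2) ^ n < y.
Proof.
  intros Hy. destruct (pow_lt_1_zero (/2)) with (y := y) as [N HN]; [|exact Hy|].
  { rewrite Rabs_pos_eq; lra. }
  exists N. intros n Hn. specialize (HN n Hn). pose proof (Rle_abs ((/2) ^ n)). lra.
Qed.

Lemma inf_over_approx {T : Type} (A : T -> Prop) (h : T -> R) :
  (forall x d, 0 < d -> exists y, A y /\ h y <= h x + d) ->
  inf_over (fun _ => True) h = inf_over A h.
Proof.
  intros Happrox. unfold inf_over.
  destruct (Glb_Rbar_correct (fun r => exists x, True /\ r = h x)) as [Hall_lb Hall_glb].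
  destruct (Glb_Rbar_correct (fun r => exists x, A x /\ r = h x)) as [HA_lb HA_glb].
  apply Rbar_le_antisym.
  - apply HA_glb. intros r [x [_ ->]]. apply Hall_lb. exists x. split; [exact I|reflexivity].
  - apply Hall_glb. intros r [x [_ ->]].
    revert HA_lb. generalize (Glb_Rbar (fun r => exists x, A x /\ r = h x)).
    intros [l| |] HA_lb; simpl; [| |exact I].
    + apply Rle_plus_epsilon. intros d Hd. destruct (Happrox x d Hd) as [y [Ay Hy]].
      specialize (HA_lb (h y) (ex_intro _ y (conj Ay eq_refl))). simpl in HA_lb. lra.
    + destruct (Happrox x 1 Rlt_0_1) as [y [Ay _]].
      exact (HA_lb (h y) (ex_intro _ y (conj Ay eq_refl))).
Qed.

Section MetricFacts.

Variables (M : Type) (rho : M -> M -> R).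
Hypothesis rho_metric : is_metric rho.

Lemma dist_nonneg x y : 0 <= rho x y.
Proof. apply rho_metric. Qed.

Lemma dist_self x : rho x x = 0.
Proof. apply rho_metric. reflexivity. Qed.

Lemma dist_sym x y : rho x y = rho y x.
Proof. apply rho_metric. Qed.

Lemma dist_triangle x y z : rho x z <= rho x y + rho y z.
Proof. apply rho_metric. Qed.

Lemma dist_pos x y : x <> y -> 0 < rho x y.
Proof.
  intros Hxy. destruct (dist_nonneg x y) as [Hlt|Heq]; [exact Hlt|].
  exfalso. apply Hxy. apply rho_metric. symmetry. exact Heq.
Qed.

Lemma limit_unique u x y : converges_to rho u x -> converges_to rho u y -> x = y.
Proof.
  intros Hx Hy. apply rho_metric. apply Rle_antisym; [|apply dist_nonneg].
  apply Rle_plus_epsilon. intros e He.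
  destruct (Hx (e / 2)) as [N1 HN1]; [lra|]. destruct (Hy (e / 2)) as [N2 HN2]; [lra|].
  specialize (HN1 (N1 + N2)%nat ltac:(lia)). specialize (HN2 (N1 + N2)%nat ltac:(lia)).
  pose proof (dist_triangle x (u (N1 + N2)%nat) y). rewrite dist_sym in HN1. lra.
Qed.

Lemma lipschitz_dist x : lipschitz rho (rho x).
Proof.
  exists 1. intros y z. rewrite Rmult_1_l. apply Rabs_le. split.
  - pose proof (dist_triangle x y z). lra.
  - pose proof (dist_triangle x z y). rewrite (dist_sym z y) in *. lra.
Qed.

Lemma lipschitz_lincomb p q F G :
  lipschitz rho F -> lipschitz rho G -> lipschitz rho (fun x => p * F x + q * G x).
Proof.
  intros [LF HF] [LG HG]. exists (Rabs p * LF + Rabs q * LG). intros x y.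
  replace (p * F x + q * G x - (p * F y + q * G y))
    with (p * (F x - F y) + q * (G x - G y)) by ring.
  eapply Rle_trans; [apply Rabs_triang|]. rewrite !Rabs_mult.
  assert (Rabs p * Rabs (F x - F y) <= Rabs p * (LF * rho x y))
    by (apply Rmult_le_compat_l; [apply Rabs_pos|apply HF]).
  assert (Rabs q * Rabs (G x - G y) <= Rabs q * (LG * rho x y))
    by (apply Rmult_le_compat_l; [apply Rabs_pos|apply HG]).
  lra.
Qed.

Lemma lipschitz_limit_bound H u y :
  lipschitz rho H -> converges_to rho u y ->
  forall e, 0 < e -> exists N, forall n, (N <= n)%nat -> H y <= H (u n) + e.
Proof.
  intros [L HL] Hu e He.
  assert (HL1 : 0 < Rabs L + 1) by (pose proof (Rabs_pos L); lra).
  destruct (Hu (e / (Rabs L + 1))) as [N HN]; [apply Rdiv_lt_0_compat; lra|].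
  exists N. intros n Hn. specialize (HN n Hn).
  pose proof (HL y (u n)) as Hy. rewrite dist_sym in Hy.
  assert (L * rho (u n) y <= (Rabs L + 1) * rho (u n) y).
  { apply Rmult_le_compat_r; [apply dist_nonneg|]. pose proof (Rle_abs L). lra. }
  assert ((Rabs L + 1) * rho (u n) y <= e).
  { apply Rlt_le. apply (Rmult_lt_compat_l (Rabs L + 1)) in HN; [|exact HL1].
    replace ((Rabs L + 1) * (e / (Rabs L + 1))) with e in HN by (field; lra). exact HN. }
  pose proof (Rle_abs (H y - H (u n))). lra.
Qed.

Lemma lipschitz_sublevel_closed H u y c N :
  lipschitz rho H -> converges_to rho u y ->
  (forall n, (N <= n)%nat -> H (u n) <= c) -> H y <= c.
Proof.
  intros HH Hu Hc. apply Rle_plus_epsilon. intros e He.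
  destruct (lipschitz_limit_bound H u y HH Hu e He) as [N' HN'].
  specialize (HN' (N + N')%nat ltac:(lia)). specialize (Hc (N + N')%nat ltac:(lia)). lra.
Qed.

End MetricFacts.

Section Ekeland.

Variables (M : Type) (rho : M -> M -> R).
Hypothesis rho_metric : is_metric rho.
Hypothesis rho_complete : forall u, cauchy_seq rho u -> exists x, converges_to rho u x.

Variables (F G : M -> R) (a : R).
Hypothesis F_lipschitz : lipschitz rho F.
Hypothesis G_lipschitz : lipschitz rho G.
Hypothesis F_bounded_below : bounded_below F.
Hypothesis a_pos : 0 < a.

Definition ekeland_le (y x : M) : Prop :=
  F y + a * rho x y <= F x /\ G y <= G x.

Lemma ekeland_le_refl x : ekeland_le x x.
Proof. unfold ekeland_le. rewrite (dist_self M rho rho_metric). lra. Qed.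

Lemma ekeland_le_trans x y z : ekeland_le y x -> ekeland_le z y -> ekeland_le z x.
Proof.
  intros [Hyx1 Hyx2] [Hzy1 Hzy2]. split; [|lra].
  assert (a * rho x z <= a * (rho x y + rho y z))
    by (apply Rmult_le_compat_l; [lra|apply (dist_triangle M rho rho_metric)]).
  lra.
Qed.

Lemma ekeland_le_closed u y x N :
  converges_to rho u y -> (forall n, (N <= n)%nat -> ekeland_le (u n) x) -> ekeland_le y x.
Proof.
  intros Hu Hbelow. split.
  - pose proof (lipschitz_lincomb M rho 1 a F (rho x) F_lipschitz
                  (lipschitz_dist M rho rho_metric x)) as Hlip.
    pose proof (lipschitz_sublevel_closed M rho rho_metric _ u y (F x) N Hlip Hu) as Hcl.
    simpl in Hcl. rewrite Rmult_1_l in Hcl. apply Hcl.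
    intros n Hn. rewrite Rmult_1_l. apply Hbelow, Hn.
  - apply (lipschitz_sublevel_closed M rho rho_metric G u y (G x) N G_lipschitz Hu).
    intros n Hn. apply Hbelow, Hn.
Qed.

Theorem ekeland_principle x0 :
  exists y, ekeland_le y x0 /\ forall z, ekeland_le z y -> z = y.
Proof.
  destruct F_bounded_below as [m Hm].
  (* at step n, pick an (1/2)^n-minimizer of F below the current point *)
  destruct (dependent_choice (fun n x y => ekeland_le y x /\
     forall y', ekeland_le y' x -> F y <= F y' + (/2) ^ n) x0) as [u [Hu0 Hu]].
  { intros n x. apply (near_minimizer (fun y => ekeland_le y x) F m _ x).
    - apply ekeland_le_refl.
    - intros y _. apply Hm.
    - apply pow_lt. lra. }
  assert (Hchain : forall n k, (n <= k)%nat -> ekeland_le (u k) (u n)).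
  { intros n k Hnk. induction Hnk as [|k Hnk IH].
    - apply ekeland_le_refl.
    - apply ekeland_le_trans with (u k); [exact IH|apply Hu]. }
  (* everything below u (S n) lies within (1/2)^n / a of it *)
  assert (Hshrink : forall n z, ekeland_le z (u (S n)) -> a * rho (u (S n)) z <= (/2) ^ n).
  { intros n z Hz. destruct (Hu n) as [Hstep Hmin].
    specialize (Hmin z (ekeland_le_trans _ _ _ Hstep Hz)). destruct Hz. lra. }
  assert (Htail : forall e, 0 < e -> exists N, forall n z, (N <= n)%nat ->
             ekeland_le z (u (S n)) -> rho (u (S n)) z < e).
  { intros e He. destruct (pow_half_small (a * e)) as [N HN]; [apply Rmult_lt_0_compat; lra|].
    exists N. intros n z Hn Hz. apply (Rmult_lt_reg_l a); [exact a_pos|].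
    specialize (Hshrink n z Hz). specialize (HN n Hn). lra. }
  assert (Hcauchy : cauchy_seq rho u).
  { intros e He. destruct (Htail (e / 2)) as [N HN]; [lra|].
    exists (S N). intros n k Hn Hk.
    assert (Hn' : rho (u (S N)) (u n) < e / 2) by (apply HN; [lia|apply Hchain, Hn]).
    assert (Hk' : rho (u (S N)) (u k) < e / 2) by (apply HN; [lia|apply Hchain, Hk]).
    pose proof (dist_triangle M rho rho_metric (u n) (u (S N)) (u k)).
    rewrite (dist_sym M rho rho_metric (u (S N)) (u n)) in Hn'. lra. }
  destruct (rho_complete u Hcauchy) as [y Hy].
  assert (Hy_below : forall n, ekeland_le y (u n)).
  { intros n. apply (ekeland_le_closed u y (u n) n Hy). intros k Hk. apply Hchain, Hk. }
  exists y. split; [rewrite <- Hu0; apply Hy_below|].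
  (* a point below y is below every u (S n), hence is the limit of u (S n) *)
  intros z Hz. apply (limit_unique M rho rho_metric (fun n => u (S n))).
  - intros e He. destruct (Htail e He) as [N HN]. exists N. intros n Hn.
    apply HN; [exact Hn|]. apply ekeland_le_trans with y; [apply Hy_below|exact Hz].
  - intros e He. destruct (Hy e He) as [N HN]. exists N. intros n Hn. apply HN. lia.
Qed.

End Ekeland.

Arguments ekeland_le {M} rho F G a y x.

Section GlobalSlope.

Variables (M : Type) (rho : M -> M -> R).
Hypothesis rho_metric : is_metric rho.

Lemma slope_le_iff f y s :
  0 <= s ->
  Rbar_le (global_slope rho f y) (Finite s) <-> forall z, f y - f z <= s * rho y z.
Proof.
  intros Hs. unfold global_slope.
  destruct (Lub_Rbar_correct (fun r => r = 0 \/
    exists z, z <> y /\ r = Rmax 0 (f y - f z) / rho y z)) as [Hub Hlub].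
  split.
  - intros Hle z. destruct (classic (z = y)) as [-> | Hzy].
    + rewrite (dist_self M rho rho_metric). lra.
    + pose proof (dist_pos M rho rho_metric y z (not_eq_sym Hzy)) as Hd.
      assert (Hq := Rbar_le_trans _ _ _ (Hub _ (or_intror (ex_intro _ z (conj Hzy eq_refl)))) Hle).
      simpl in Hq. apply Rle_div_l in Hq; [|exact Hd].
      pose proof (Rmax_r 0 (f y - f z)). lra.
  - intros Hdecr. apply Hlub. intros r [-> | [z [Hzy ->]]]; simpl; [exact Hs|].
    pose proof (dist_pos M rho rho_metric y z (not_eq_sym Hzy)) as Hd.
    apply Rle_div_l; [exact Hd|]. apply Rmax_lub; [|apply Hdecr].
    apply Rmult_le_pos; lra.
Qed.

Lemma slope_finite f y :
  lipschitz rho f -> exists s, 0 <= s /\ global_slope rho f y = Finite s.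
Proof.
  intros [L HL].
  assert (Hupper : Rbar_le (global_slope rho f y) (Finite (Rabs L))).
  { apply slope_le_iff; [apply Rabs_pos|]. intros z.
    pose proof (Rle_abs (f y - f z)). pose proof (HL y z).
    assert (L * rho y z <= Rabs L * rho y z)
      by (apply Rmult_le_compat_r; [apply (dist_nonneg M rho rho_metric)|apply Rle_abs]).
    lra. }
  assert (Hlower : Rbar_le (Finite 0) (global_slope rho f y))
    by (apply Lub_Rbar_correct; left; reflexivity).
  destruct (global_slope rho f y) as [s| |]; simpl in Hupper, Hlower; try contradiction.
  exists s. split; [exact Hlower|reflexivity].
Qed.

Lemma ekeland_minimal_is_critical f g c eps y :
  lipschitz rho f -> 0 < c -> 0 <= eps ->
  Rbar_le (global_slope rho g y) (global_slope rho f y) ->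
  (forall z, ekeland_le rho f (fun x => (1 + c) * f x - g x) eps z y -> z = y) ->
  eps_crit rho f eps y.
Proof.
  intros Hf Hc Heps Hslope Hminimal.
  destruct (slope_finite f y Hf) as [s [Hs0 Hs]].
  unfold eps_crit. rewrite Hs. simpl. apply Rnot_lt_le. intros Heps_s.
  (* the rate t := max(eps, s / (1 + c)) lies strictly below s *)
  set (t := Rmax eps (s / (1 + c))).
  assert (Het : eps <= t) by apply Rmax_l.
  assert (Hst : s <= (1 + c) * t).
  { pose proof (Rmax_r eps (s / (1 + c))) as H.
    apply Rmult_le_compat_l with (r := 1 + c) in H; [|lra].
    replace ((1 + c) * (s / (1 + c))) with s in H by (field; lra). exact H. }
  assert (Hts : t < s).
  { apply Rmax_lub_lt; [exact Heps_s|]. apply Rlt_div_l; [lra|]. nra. }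
  (* f drops from y faster than t towards some z ... *)
  assert (Hsteep : ~ forall z, f y - f z <= t * rho y z).
  { rewrite <- slope_le_iff by lra. rewrite Hs. simpl. lra. }
  apply not_all_ex_not in Hsteep as [z Hz]. apply Rnot_le_lt in Hz.
  (* ... while g drops at rate at most s *)
  assert (Hg : g y - g z <= s * rho y z).
  { apply slope_le_iff; [exact Hs0|]. rewrite <- Hs. exact Hslope. }
  pose proof (dist_nonneg M rho rho_metric y z) as Hd.
  assert (Hbelow : ekeland_le rho f (fun x => (1 + c) * f x - g x) eps z y).
  { split.
    - assert (eps * rho y z <= t * rho y z) by (apply Rmult_le_compat_r; lra). lra.
    - assert (s * rho y z <= (1 + c) * t * rho y z) by (apply Rmult_le_compat_r; lra).
      assert ((1 + c) * (t * rho y z) <= (1 + c) * (f y - f z))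
        by (apply Rmult_le_compat_l; lra).
      lra. }
  rewrite (Hminimal z Hbelow), (dist_self M rho rho_metric) in Hz. lra.
Qed.

End GlobalSlope.

Lemma approximate_critical_point (M : Type) (rho : M -> M -> R) (f g : M -> R) eps x0 d :
  complete_metric rho -> lipschitz rho f -> lipschitz rho g -> bounded_below f ->
  (forall x, Rbar_le (global_slope rho g x) (global_slope rho f x)) ->
  0 < eps -> 0 < d ->
  exists y, eps_crit rho f eps y /\ f y - g y <= f x0 - g x0 + d.
Proof.
  intros [Hmetric Hcomplete] Hf Hg [m Hm] Hslope Heps Hd.
  (* the perturbation c (f x0 - f y) <= c (f x0 - m) must stay below d *)
  set (c := d / (f x0 - m + 1)).
  assert (Hgap : 0 <= f x0 - m) by (specialize (Hm x0); lra).
  assert (Hc : 0 < c) by (apply Rdiv_lt_0_compat; lra).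
  assert (Hcd : c * (f x0 - m) <= d).
  { apply Rle_trans with (c * (f x0 - m + 1)); [apply Rmult_le_compat_l; lra|].
    right. unfold c. field. lra. }
  set (G := fun x => (1 + c) * f x - g x).
  assert (HG : lipschitz rho G).
  { destruct (lipschitz_lincomb M rho (1 + c) (-1) f g Hf Hg) as [L HL]. exists L. intros x y.
    unfold G. replace ((1 + c) * f x - g x - ((1 + c) * f y - g y))
      with ((1 + c) * f x + -1 * g x - ((1 + c) * f y + -1 * g y)) by ring.
    apply HL. }
  destruct (ekeland_principle M rho Hmetric Hcomplete f G eps Hf HG (ex_intro _ m Hm) Heps x0)
    as [y [[Hfy HGy] Hminimal]].
  exists y. split.
  - exact (ekeland_minimal_is_critical M rho Hmetric f g c eps y Hf Hc (Rlt_le _ _ Heps) (Hslope y) Hminimal).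
  - unfold G in HGy.
    assert (c * (f x0 - f y) <= c * (f x0 - m))
      by (apply Rmult_le_compat_l; [lra|specialize (Hm y); lra]).
    lra.
Qed.

Theorem proposition3p2 (M : Type) (rho : M -> M -> R) (f g : M -> R) :
  complete_metric rho ->
  lipschitz rho f -> lipschitz rho g ->
  bounded_below f ->
  (forall x, Rbar_le (global_slope rho g x) (global_slope rho f x)) ->
  forall eps : R, 0 < eps ->
    inf_over (fun _ => True) (fun x => f x - g x)
    = inf_over (eps_crit rho f eps) (fun x => f x - g x).
Proof.
  intros Hcomplete Hf Hg Hbelow Hslope eps Heps.
  apply inf_over_approx. intros x0 d Hd.
  exact (approximate_critical_point M rho f g eps x0 d Hcomplete Hf Hg Hbelow Hslope Heps Hd).
Qed.
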